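(* For $n\ge3$ define the graphon $W_n$ on $[0,1]^2$ by $W_n(x,y)=1$ if ($x\le\frac12-\frac1n$ and $y\ge\frac12+\frac1n$), or ($x\ge\frac12+\frac1n$ and $y\le\frac12-\frac1n$), or ($x,y\in[\frac12-e^{-n}-\frac1n,\ \frac12+e^{-n}+\frac1n]$), and $W_n(x,y)=0$ otherwise. Let $W(x,y)=1$ if exactly one of $x,y$ lies in $[0,\frac12]$ and $W(x,y)=0$ otherwise. Then each $W_n$ is connected, $\|W_n-W\|_{L^1([0,1]^2)}\to0$, $h_{W_n}\to0$, but $h_W=\frac12$. In particular $h_{W_n}\not\to h_W$.
   Context: A graphon is a measurable symmetric $W:[0,1]^2\to[0,1]$. For measurable $A,B\subseteq[0,1]$, $e_W(A,B)=\int_{A\times B}W$, $\mathrm{vol}_W(A)=e_W(A,[0,1])$. $W$ is connected if $e_W(A,A^c)\ne0$ for every measurable $A$ with $0<\mu_L(A)<1$ ($\mu_L$ Lebesgue measure). The Cheeger constant is $h_W=\inf_{A:\,0<\mu_L(A)<1}\frac{e_W(A,A^c)}{\min\{\mathrm{vol}_W(A),\mathrm{vol}_W(A^c)\}}$. *)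

From HB Require Import structures.
From mathcomp Require Import all_boot all_order all_algebra.
From mathcomp Require Import all_classical all_reals all_analysis.
Set Implicit Arguments. Unset Strict Implicit. Unset Printing Implicit Defensive.
Import Order.TTheory GRing.Theory Num.Theory.
Import numFieldNormedType.Exports.
Local Open Scope classical_set_scope.
Local Open Scope ring_scope.

Section GraphonDefs.
Variable R : realType.

Definition unit_itv : set R := `[0%R, 1%R].
Definition leb := (@lebesgue_measure R).
Definition leb2 := (leb \x leb)%E.

(* a graphon: measurable symmetric function [0,1]^2 -> [0,1]
   (represented as a function on R x R, only its values on [0,1]^2 matter) *)
Definition is_graphon (W : R -> R -> R) : Prop :=
  measurable_fun (unit_itv `*` unit_itv) (fun p : R * R => W p.1 p.2) /\
  (forall x y, x \in unit_itv -> y \in unit_itv -> W x y = W y x) /\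
  (forall x y, x \in unit_itv -> y \in unit_itv -> 0 <= W x y <= 1).

Definition edges (W : R -> R -> R) (A B : set R) : R :=
  Rintegral leb2 (A `*` B) (fun p : R * R => W p.1 p.2).

Definition vol (W : R -> R -> R) (A : set R) : R := edges W A unit_itv.

Definition compl01 (A : set R) : set R := unit_itv `\` A.

Definition admissible (A : set R) : Prop :=
  [/\ measurable A, A `<=` unit_itv, (0 < leb A)%E & (leb A < 1)%E].

Definition graphon_connected (W : R -> R -> R) : Prop :=
  forall A, admissible A -> edges W A (compl01 A) != 0.

Definition cheeger (W : R -> R -> R) : R :=
  inf [set edges W A (compl01 A) / Num.min (vol W A) (vol W (compl01 A))
      | A in admissible].

Definition Wn (n : nat) (x y : R) : R :=
  let a := 2^-1 - n%:R^-1 in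
  let b := 2^-1 + n%:R^-1 in
  let c := 2^-1 - expR (- n%:R) - n%:R^-1 in
  let d := 2^-1 + expR (- n%:R) + n%:R^-1 in
  if [|| (x <= a) && (b <= y), (b <= x) && (y <= a)
       | [&& c <= x, x <= d, c <= y & y <= d]] then 1 else 0.

Definition Wlim (x y : R) : R :=
  if (x \in `[0, 2^-1]) (+) (y \in `[0, 2^-1]) then 1 else 0.

End GraphonDefs.

(* Every graphon in sight is the indicator of a finite union of rectangles, so all edge
   densities reduce to products of lengths. W_n agrees with W on [0,1]^2 outside the two
   strips over the core C_n = [1/2 - e^-n - 1/n, 1/2 + e^-n + 1/n], which have area O(1/n);
   this gives the L^1 convergence. If e(A, A^c) = 0 then |A & P| |A^c & Q| = 0 for every
   block P x Q of W_n. By the core square one side, say A, is null on C_n; then A^c has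
   positive measure in the overlaps of C_n with both outer intervals, so A is null on
   these intervals too, hence null: W_n is connected. Cutting along C_n only separates the
   two overlaps of width e^-n, while both sides have volume at least 4/n^2, so
   h_{W_n} <= n^2 e^-n / 2 <= 3/n. For W, if a and b are the measures of A in the two
   halves of [0,1], the cut a (1/2 - b) + b (1/2 - a) is at least half of
   min(vol A, vol A^c), with equality for A = [1/4, 3/4]. *)

From HB Require Import structures.
From mathcomp Require Import all_boot all_order all_algebra.
From mathcomp Require Import all_classical all_reals all_analysis.
From mathcomp Require Import ring lra.
Import measurable_realfun.
Import Order.TTheory GRing.Theory Num.Theory.
Import numFieldNormedType.Exports.
Local Open Scope classical_set_scope.
Local Open Scope ring_scope.
Set Implicit Arguments. Unset Strict Implicit. Unset Printing Implicit Defensive.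

Section unit_interval_measure.
Variable R : realType.
Local Notation mu := (@lebesgue_measure R).
Local Notation U := (@unit_itv R).
Implicit Types (A X Y I : set R).

Definition lmeas X : R := fine (mu X).

Lemma measurable_unit_itv : measurable U.
Proof. exact: measurable_itv. Qed.

Lemma lebesgue_unit_itv : mu U = 1%E.
Proof. by rewrite /unit_itv lebesgue_measure_itv /= lte_fin ltr01 oppr0 adde0. Qed.

Lemma lmeas_unit_itv : lmeas U = 1.
Proof. by rewrite /lmeas lebesgue_unit_itv. Qed.

Lemma lmeas0 : lmeas set0 = 0.
Proof. by rewrite /lmeas measure0. Qed.

Lemma lmeas_ge0 X : 0 <= lmeas X.
Proof. exact/fine_ge0/measure_ge0. Qed.

Lemma lmeasE X : measurable X -> X `<=` U -> mu X = (lmeas X)%:E.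
Proof.
move=> mX XU; rewrite /lmeas fineK // ge0_fin_numE ?measure_ge0 //.
apply: le_lt_trans (ltry 1); rewrite -lebesgue_unit_itv.
by apply: le_measure => //; rewrite inE //; exact: measurable_unit_itv.
Qed.

Lemma le_lmeas X Y : measurable X -> measurable Y -> X `<=` Y -> Y `<=` U ->
  lmeas X <= lmeas Y.
Proof.
move=> mX mY XY YU; rewrite -lee_fin -!lmeasE //; last exact: subset_trans YU.
by apply: le_measure => //; rewrite inE.
Qed.

Lemma lmeas_le1 X : measurable X -> X `<=` U -> lmeas X <= 1.
Proof.
move=> mX XU; rewrite -lmeas_unit_itv.
exact: le_lmeas mX measurable_unit_itv XU (@subset_refl _ _).
Qed.

Lemma lmeas_itv (x y : R) : x <= y -> lmeas `[x, y] = y - x.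
Proof.
rewrite /lmeas lebesgue_measure_itv /= lte_fin le_eqVlt => /predU1P[->|->] //=.
by rewrite ltxx subrr.
Qed.

Lemma lmeas_le_itv X (x y : R) : x <= y -> measurable X ->
  X `<=` `[x, y] -> `[x, y] `<=` U -> lmeas X <= y - x.
Proof.
by move=> xy mX Xxy xyU; rewrite -lmeas_itv //; apply: le_lmeas => //; exact: measurable_itv.
Qed.

Lemma itv_le_lmeas X (x y : R) : x <= y -> measurable X ->
  `[x, y] `<=` X -> X `<=` U -> y - x <= lmeas X.
Proof.
by move=> xy mX xyX XU; rewrite -lmeas_itv //; apply: le_lmeas => //; exact: measurable_itv.
Qed.

Lemma lmeas_setIC X I : measurable X -> measurable I -> X `<=` U ->
  lmeas X = lmeas (X `&` I) + lmeas (X `&` ~` I).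
Proof.
move=> mX mI XU.
have sub Y : X `&` Y `<=` U := subIset (or_introl XU).
have mXCI : measurable (X `&` ~` I) by apply: measurableI => //; exact: measurableC.
have : mu X = (mu (X `\` I) + mu (X `&` I))%E := measureDI mu mX mI.
rewrite setDE (lmeasE mX XU) (lmeasE (measurableI _ _ mX mI) (sub _)).
by rewrite (lmeasE mXCI (sub _)) -EFinD => -[->]; rewrite addrC.
Qed.

Lemma measurable_compl01 A : measurable A -> measurable (compl01 A).
Proof. by move=> mA; apply: measurableD => //; exact: measurable_unit_itv. Qed.

Lemma compl01_sub A : compl01 A `<=` U.
Proof. by move=> x []. Qed.

Lemma lmeas_compl01I A I : measurable A -> measurable I -> A `<=` U ->
  lmeas (U `&` I) = lmeas (A `&` I) + lmeas (compl01 A `&` I).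
Proof.
move=> mA mI AU.
have mUI : measurable (U `&` I) := measurableI _ _ measurable_unit_itv mI.
rewrite (lmeas_setIC mUI mA (@subIsetl _ _ _)).
by rewrite setIAC (setIidr AU) /compl01 setDE setIAC.
Qed.

Lemma lmeasU X Y : measurable X -> measurable Y -> X `<=` U -> Y `<=` U ->
  lmeas (X `|` Y) <= lmeas X + lmeas Y.
Proof.
move=> mX mY XU YU; rewrite -lee_fin EFinD -!lmeasE //; last by move=> x [/XU|/YU].
- exact: measureU2.
- exact: measurableU.
Qed.

End unit_interval_measure.

Section indicator_graphons.
Variable R : realType.
Local Notation mu := (@lebesgue_measure R).
Local Notation U := (@unit_itv R).
Local Notation leb2 := (@leb2 R).
Implicit Types (X Y P Q : set R) (S T : set (R * R)).

Lemma leb2_setX X Y : measurable X -> measurable Y -> leb2 (X `*` Y) = (mu X * mu Y)%E.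
Proof. by move=> mX mY; apply: product_measure1E. Qed.

Lemma integrable_box X Y (f : R * R -> R) (M : R) : measurable X -> measurable Y ->
  X `<=` U -> Y `<=` U -> measurable_fun setT f -> (forall p, `|f p| <= M) ->
  leb2.-integrable (X `*` Y) (EFin \o f).
Proof.
move=> mX mY XU YU mf fM; apply: measurable_bounded_integrable.
- exact: measurableX.
- have leb2_fin : (leb2 (X `*` Y) < +oo)%E.
    by rewrite leb2_setX // (lmeasE mX XU) (lmeasE mY YU) -EFinM ltry.
  exact: leb2_fin.
- exact: measurable_funS measurableT (@subsetT _ _) mf.
- exists M; split; first exact: num_real.
  by move=> r Mr p _; exact: le_trans (fM p) (ltW Mr).
Qed.

Definition indic_graphon S : R -> R -> R := fun x y => \1_S (x, y).

Lemma measurable_indic_graphon S : measurable S ->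
  measurable_fun setT (fun p : R * R => indic_graphon S p.1 p.2).
Proof.
move=> mS; rewrite (_ : (fun p => _) = \1_S); first exact: measurable_indic.
by apply/funext => -[].
Qed.

Lemma indic_graphon_ge0 S x y : 0 <= indic_graphon S x y.
Proof. by rewrite /indic_graphon indicE ler0n. Qed.

Lemma is_graphon_indic S : measurable S -> (forall x y, S (x, y) -> S (y, x)) ->
  is_graphon (indic_graphon S).
Proof.
move=> mS Ssym; split; [|split].
- exact: measurable_funS measurableT (@subsetT _ _) (measurable_indic_graphon mS).
- move=> x y _ _; rewrite /indic_graphon !indicE.
  suff -> : ((x, y) \in S) = ((y, x) \in S) by [].
  by apply/idP/idP => /set_mem/Ssym/mem_set.
- move=> x y _ _; rewrite indic_graphon_ge0 /indic_graphon indicE /=.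
  by case: (_ \in _); rewrite ?ler01.
Qed.

Section edges_of_indicators.
Variables (X Y : set R).
Hypotheses (mX : measurable X) (mY : measurable Y) (XU : X `<=` U) (YU : Y `<=` U).

Lemma edges_indic S : edges (indic_graphon S) X Y = \int[leb2]_(p in X `*` Y) \1_S p.
Proof. by congr (fine _); apply: eq_integral => -[]. Qed.

Let norm_indic_le1 S p : `|\1_S p : R| <= 1.
Proof. by rewrite indicE; case: (_ \in _); rewrite ?normr0 ?normr1. Qed.

Lemma integrable_indic_box S : measurable S -> leb2.-integrable (X `*` Y) (EFin \o \1_S).
Proof. by move=> mS; exact: integrable_box mX mY XU YU (measurable_indic mS) (norm_indic_le1 S).
Qed.

Lemma edges_indic_setX P Q : measurable P -> measurable Q ->
  edges (indic_graphon (P `*` Q)) X Y = lmeas (X `&` P) * lmeas (Y `&` Q).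
Proof.
move=> mP mQ; rewrite edges_indic /Rintegral integral_indic; last 2 first.
- exact: measurableX.
- exact: measurableX.
rewrite -setXI (_ : _ (_ `*` _) = mu (P `&` X) * mu (Q `&` Y))%E; last first.
  by apply: product_measure1E; exact: measurableI.
rewrite setIC (lmeasE (measurableI _ _ mX mP) (subIset (or_introl XU))).
rewrite [Q `&` _]setIC (lmeasE (measurableI _ _ mY mQ) (subIset (or_introl YU))).
by rewrite -EFinM.
Qed.

Lemma le_edges_indic S T : measurable S -> measurable T -> S `<=` T ->
  edges (indic_graphon S) X Y <= edges (indic_graphon T) X Y.
Proof.
move=> mS mT ST; rewrite !edges_indic.
apply: le_Rintegral; [exact: measurableX|exact: integrable_indic_box..|].
move=> p _; rewrite !indicE; have [/set_mem/ST/mem_set -> //|_] := boolP (p \in S).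
by rewrite ler0n.
Qed.

Lemma lmeas_setX_le_edges S P Q : measurable S -> measurable P -> measurable Q ->
  P `*` Q `<=` S -> lmeas (X `&` P) * lmeas (Y `&` Q) <= edges (indic_graphon S) X Y.
Proof.
move=> mS mP mQ PQS; rewrite -edges_indic_setX //.
by apply: le_edges_indic => //; exact: measurableX.
Qed.

Lemma edges_indicU_le S T : measurable S -> measurable T ->
  edges (indic_graphon (S `|` T)) X Y <=
  edges (indic_graphon S) X Y + edges (indic_graphon T) X Y.
Proof.
move=> mS mT; rewrite !edges_indic -RintegralD;
  [|exact: measurableX|exact: integrable_indic_box..].
apply: le_Rintegral.
- exact: measurableX.
- by apply: integrable_indic_box; exact: measurableU.
- apply: (integrable_box (M := 2) mX mY XU YU).
    by apply: measurable_funD; exact: measurable_indic.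
  move=> p; apply: le_trans (ler_normD _ _) _.
  by have := norm_indic_le1 S p; have := norm_indic_le1 T p; lra.
- move=> p _; rewrite !indicE in_setU.
  by case: (_ \in S); case: (_ \in T); rewrite /= ?addr0 ?add0r ?ler0n ?ler01 ?lerDl.
Qed.

Lemma edges_indicU S T : measurable S -> measurable T -> [disjoint S & T] ->
  edges (indic_graphon (S `|` T)) X Y =
  edges (indic_graphon S) X Y + edges (indic_graphon T) X Y.
Proof.
move=> mS mT /disj_setPS ST; rewrite !edges_indic -RintegralD;
  [|exact: measurableX|exact: integrable_indic_box..].
apply: eq_Rintegral => p _; rewrite !indicE in_setU.
have [pS|_] := boolP (p \in S); last by rewrite add0r.
have /negbTE -> : p \notin T.
  by apply/negP => pT; exact: ST p (conj (set_mem pS) (set_mem pT)).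
by rewrite addr0.
Qed.

End edges_of_indicators.
End indicator_graphons.

Section cheeger_constant.
Variable R : realType.
Implicit Types (W : R -> R -> R) (A B : set R).

Definition cheeger_ratio W A : R :=
  edges W A (compl01 A) / Num.min (vol W A) (vol W (compl01 A)).

Lemma edges_ge0 W A B : (forall x y, 0 <= W x y) -> 0 <= edges W A B.
Proof. by move=> W0; apply: Rintegral_ge0 => p _; exact: W0. Qed.

Lemma cheeger_ratio_ge0 W A : (forall x y, 0 <= W x y) -> 0 <= cheeger_ratio W A.
Proof. by move=> W0; rewrite divr_ge0 ?le_min /vol ?edges_ge0. Qed.

Lemma cheeger_le_ratio W A : (forall x y, 0 <= W x y) -> admissible A ->
  cheeger W <= cheeger_ratio W A.
Proof.
move=> W0 hA; apply: ge_inf; last by exists A.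
by exists 0 => r [B _ <-]; exact: cheeger_ratio_ge0.
Qed.

Lemma le_cheeger W r : (exists A, admissible A) ->
  (forall A, admissible A -> r <= cheeger_ratio W A) -> r <= cheeger W.
Proof.
move=> [A hA] H; apply: lb_le_inf; first by exists (cheeger_ratio W A), A.
by move=> s [B hB <-]; exact: H.
Qed.

Lemma admissible_itv (a b : R) : 0 <= a -> a < b -> b <= 1 -> b - a < 1 ->
  admissible `[a, b].
Proof.
move=> a0 ab b1 ba1; have sub : `[a, b] `<=` @unit_itv R.
  by move=> x; rewrite /unit_itv /= !in_itv /= => /andP[? ?]; apply/andP; split; lra.
split; [exact: measurable_itv|exact: sub| |];
  by rewrite /leb (lmeasE (measurable_itv _) sub) lmeas_itv ?lte_fin; lra.
Qed.

Lemma cheeger_ge0 W : (forall x y, 0 <= W x y) -> 0 <= cheeger W.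
Proof.
move=> W0; apply: le_cheeger => [|A _]; last exact: cheeger_ratio_ge0.
by exists `[0, 2^-1]%classic; apply: admissible_itv; lra.
Qed.

End cheeger_constant.

Section exponential_bounds.
Variable R : realType.

Lemma expRN_lt_inv (x : R) : 0 < x -> expR (- x) < x^-1.
Proof.
move=> x0; rewrite expRN ltf_pV2 ?posrE ?expR_gt0 //.
by apply: lt_le_trans (expR_ge1Dx x); lra.
Qed.

Lemma expRN_cube_le (x : R) : 0 <= x -> x ^+ 3 * expR (- x) <= 6.
Proof.
move=> x0; have := @expR_ge1Dxn R x 2 x0; rewrite (_ : (2.+1)`!%:R = 6 :> R) // => h.
rewrite expRN ler_pdivrMr ?expR_gt0 //; lra.
Qed.

End exponential_bounds.

Section Wn_graphon.
Variables (R : realType) (n : nat).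
Local Notation U := (@unit_itv R).
Local Notation r := (n%:R^-1 : R).
Local Notation e := (expR (- n%:R) : R).

Definition Wn_low : set R := `]-oo, 2^-1 - r].
Definition Wn_high : set R := `[2^-1 + r, +oo[.
Definition Wn_core : set R := `[2^-1 - e - r, 2^-1 + e + r].
Definition Wn_support : set (R * R) :=
  Wn_low `*` Wn_high `|` Wn_high `*` Wn_low `|` Wn_core `*` Wn_core.

Lemma WnE : @Wn R n = indic_graphon Wn_support.
Proof.
apply/funext => x; apply/funext => y.
rewrite /Wn /indic_graphon indicE !in_setU !in_setX /= !mem_setE !in_itv /= !andbT.
by rewrite -!andbA orbA; case: ifP.
Qed.

Lemma measurable_Wn_support : measurable Wn_support.
Proof.
by apply: measurableU; [apply: measurableU|]; apply: measurableX; exact: measurable_itv.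
Qed.

Lemma Wn_support_sym x y : Wn_support (x, y) -> Wn_support (y, x).
Proof. by move=> [[[? ?]|[? ?]]|[? ?]]; [left; right|left; left|right]. Qed.

Lemma graphon_Wn : is_graphon (@Wn R n).
Proof.
by rewrite WnE; apply: is_graphon_indic; [exact: measurable_Wn_support|exact: Wn_support_sym].
Qed.

Lemma Wn_ge0 (x y : R) : 0 <= Wn n x y.
Proof. by rewrite WnE indic_graphon_ge0. Qed.

Lemma Wn_blocks_cover : Wn_low `|` Wn_high `|` Wn_core = setT.
Proof.
apply/seteqP; split => // x _; rewrite /Wn_low /Wn_high /Wn_core /=.
have e0 : 0 < e := expR_gt0 _.
case: (leP x (2^-1 - r)) => xa; first by left; left; rewrite /= in_itv /= xa.
case: (leP (2^-1 + r) x) => xb; first by left; right; rewrite /= in_itv /= xb.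
by right; rewrite /= in_itv /=; apply/andP; split; lra.
Qed.

Lemma lmeas_le_blocks X : measurable X -> X `<=` U ->
  lmeas X <= lmeas (X `&` Wn_low) + lmeas (X `&` Wn_high) + lmeas (X `&` Wn_core).
Proof.
move=> mX XU; have mI (I : set R) : measurable I -> measurable (X `&` I) by exact: measurableI.
have sub (I : set R) : X `&` I `<=` U := subIset (or_introl XU).
have mlow : measurable (X `&` Wn_low) by apply: mI; exact: measurable_itv.
have mhigh : measurable (X `&` Wn_high) by apply: mI; exact: measurable_itv.
have mcore : measurable (X `&` Wn_core) by apply: mI; exact: measurable_itv.
rewrite -{1}(setIT X) -Wn_blocks_cover !setIUr.
apply: le_trans (lmeasU _ _ _ (sub _)) _ => //.
- exact: measurableU.
- by rewrite -setIUr; exact: sub.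
by rewrite lerD2r lmeasU.
Qed.

Section connectivity.
Hypothesis n3 : (3 <= n)%N.

Lemma Wn_scale_bounds : [/\ 0 < r, r <= 3^-1, 0 < e & e <= r].
Proof.
have n3R : (3 : R) <= n%:R by rewrite (ler_nat R 3 n).
have r0 : 0 < r by rewrite invr_gt0; lra.
split => //; first by rewrite lef_pV2 ?posrE //; lra.
by apply/ltW/expRN_lt_inv; lra.
Qed.

(* Halves of the overlaps of the core with the two outer blocks: halving keeps them
   inside [0,1] already for n = 3. *)
Definition Wn_low_overlap : set R := `[2^-1 - r - e / 2, 2^-1 - r].
Definition Wn_high_overlap : set R := `[2^-1 + r, 2^-1 + r + e / 2].

Lemma Wn_overlaps_sub :
  [/\ Wn_low_overlap `<=` U `&` Wn_low `&` Wn_core &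
      Wn_high_overlap `<=` U `&` Wn_high `&` Wn_core].
Proof.
have [r0 r3 e0 er] := Wn_scale_bounds.
split=> x; rewrite /Wn_low_overlap /Wn_high_overlap /= in_itv /= => /andP[? ?].
all: split; [split|]; rewrite /unit_itv /Wn_low /Wn_high /Wn_core /= in_itv /= ?andbT;
  try apply/andP; try split; lra.
Qed.

Lemma lmeas_Wn_overlaps : lmeas Wn_low_overlap = e / 2 /\ lmeas Wn_high_overlap = e / 2.
Proof. by have [_ _ e0 _] := Wn_scale_bounds; rewrite !lmeas_itv; lra. Qed.

Lemma lmeas_eq0_of_null_core X Y : measurable X -> measurable Y -> X `<=` U -> Y `<=` U ->
  (forall I, measurable I -> lmeas (U `&` I) = lmeas (X `&` I) + lmeas (Y `&` I)) ->
  lmeas (X `&` Wn_low) * lmeas (Y `&` Wn_high) = 0 ->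
  lmeas (X `&` Wn_high) * lmeas (Y `&` Wn_low) = 0 ->
  lmeas (X `&` Wn_core) = 0 -> lmeas X = 0.
Proof.
move=> mX mY XU YU partXY lowhigh0 highlow0 core0.
have [_ _ e0 _] := Wn_scale_bounds.
have mI (Z I : set R) : measurable Z -> measurable I -> measurable (Z `&` I) by exact: measurableI.
have Y_pos I K : measurable I -> measurable K -> K `<=` U `&` Wn_core -> K `<=` I ->
    0 < lmeas K -> 0 < lmeas (Y `&` I).
  move=> mI' mK KU KI K0.
  have XK0 : lmeas (X `&` K) = 0.
    apply/le_anti; rewrite lmeas_ge0 andbT -core0; apply: le_lmeas.
    - exact: mI.
    - by apply: mI => //; exact: measurable_itv.
    - by move=> x [Xx /KU[]].
    - exact: subIset (or_introl XU).
  have := partXY _ mK; rewrite (setIidr (subset_trans KU (@subIsetl _ _ _))) XK0 add0r => YK.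
  apply: lt_le_trans (le_lmeas (mI _ _ mY mK) (mI _ _ mY mI') _ (subIset (or_introl YU))).
    by rewrite -YK.
  by move=> x [Yx /KI].
have [hl hh] := Wn_overlaps_sub; have [el eh] := lmeas_Wn_overlaps.
have Y_low : 0 < lmeas (Y `&` Wn_low).
  apply: (Y_pos _ Wn_low_overlap); try exact: measurable_itv; last by rewrite el; lra.
  - by move=> x /hl[[? _] ?].
  - by move=> x /hl[[_ ?] _].
have Y_high : 0 < lmeas (Y `&` Wn_high).
  apply: (Y_pos _ Wn_high_overlap); try exact: measurable_itv; last by rewrite eh; lra.
  - by move=> x /hh[[? _] ?].
  - by move=> x /hh[[_ ?] _].
move/eqP: lowhigh0; rewrite mulf_eq0 (gt_eqF Y_high) orbF => /eqP low0.
move/eqP: highlow0; rewrite mulf_eq0 (gt_eqF Y_low) orbF => /eqP high0.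
by apply/le_anti; rewrite lmeas_ge0 andbT; have := lmeas_le_blocks mX XU; lra.
Qed.

Lemma Wn_connected : graphon_connected (@Wn R n).
Proof.
move=> A [mA AU A0 A1]; set B := compl01 A.
have mB : measurable B := measurable_compl01 mA.
have BU : B `<=` U := @compl01_sub _ A.
have partAB I : measurable I -> lmeas (U `&` I) = lmeas (A `&` I) + lmeas (B `&` I).
  by move=> mI; exact: lmeas_compl01I.
rewrite /leb (lmeasE mA AU) !lte_fin in A0 A1.
have lmB0 : 0 < lmeas B.
  by have := partAB _ measurableT; rewrite !setIT lmeas_unit_itv; lra.
apply/eqP => cut0.
have block0 P Q : measurable P -> measurable Q -> P `*` Q `<=` Wn_support ->
    lmeas (A `&` P) * lmeas (B `&` Q) = 0.
  move=> mP mQ PQS; apply/le_anti; rewrite mulr_ge0 ?lmeas_ge0 // andbT.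
  by have := lmeas_setX_le_edges mA mB AU BU measurable_Wn_support mP mQ PQS; rewrite -WnE cut0.
have [mlow mhigh mcore] : [/\ measurable Wn_low, measurable Wn_high & measurable Wn_core].
  by split; exact: measurable_itv.
have lowhigh0 := block0 _ _ mlow mhigh (fun p hp => or_introl (or_introl hp)).
have highlow0 := block0 _ _ mhigh mlow (fun p hp => or_introl (or_intror hp)).
have /eqP := block0 _ _ mcore mcore (fun p hp => or_intror hp).
rewrite mulf_eq0 => /orP[/eqP coreA0|/eqP coreB0].
- by have := lmeas_eq0_of_null_core mA mB AU BU partAB lowhigh0 highlow0 coreA0; lra.
- have partBA I : measurable I -> lmeas (U `&` I) = lmeas (B `&` I) + lmeas (A `&` I).
    by move=> mI; rewrite addrC; exact: partAB.
  rewrite mulrC in lowhigh0; rewrite mulrC in highlow0.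
  by have := lmeas_eq0_of_null_core mB mA BU AU partBA highlow0 lowhigh0 coreB0; lra.
Qed.

End connectivity.

Section cheeger_bound.
Hypothesis n12 : (12 <= n)%N.

Lemma Wn_scale_bounds12 : [/\ 0 < r, r <= 12^-1, 0 < e, e <= r & e <= 6 * r ^+ 3].
Proof.
have [r0 _ e0 er] := Wn_scale_bounds (leq_trans (isT : (3 <= 12)%N) n12).
have nR : (12 : R) <= n%:R by rewrite (ler_nat R 12 n).
split => //; first by rewrite lef_pV2 ?posrE //; lra.
have n0 : (0 : R) < n%:R ^+ 3 by apply: exprn_gt0; lra.
by rewrite exprVn ler_pdivlMr // mulrC; exact: expRN_cube_le.
Qed.

Lemma Wn_core_sub : Wn_core `<=` U.
Proof.
have [r0 r12 e0 er _] := Wn_scale_bounds12.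
by move=> x; rewrite /Wn_core /unit_itv /= !in_itv /= => /andP[? ?]; apply/andP; split; lra.
Qed.

Lemma lmeas_Wn_core : lmeas Wn_core = 2 * e + 2 * r.
Proof. by have [r0 _ e0 _ _] := Wn_scale_bounds12; rewrite lmeas_itv; [ring | lra]. Qed.

Lemma admissible_Wn_core : admissible Wn_core.
Proof. by have [r0 r12 e0 er _] := Wn_scale_bounds12; apply: admissible_itv; lra. Qed.

Let mU : measurable U := @measurable_unit_itv R.
Let mcore : measurable Wn_core := measurable_itv _.
Let mlow : measurable Wn_low := measurable_itv _.
Let mhigh : measurable Wn_high := measurable_itv _.
Let mB : measurable (compl01 Wn_core) := measurable_compl01 mcore.
Let BU : compl01 Wn_core `<=` U := @compl01_sub _ _.

Lemma lmeas_Wn_core_low : lmeas (Wn_core `&` Wn_low) <= e.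
Proof.
have [r0 r12 e0 er _] := Wn_scale_bounds12.
have -> : e = (2^-1 - r) - (2^-1 - e - r) by ring.
apply: lmeas_le_itv; [lra|exact: measurableI| |].
- move=> x []; rewrite /Wn_core /Wn_low /= !in_itv /= => /andP[? ?] ?.
  by apply/andP.
- move=> x; rewrite /= in_itv /= => /andP[? ?]; apply: Wn_core_sub.
  by rewrite /Wn_core /= in_itv /=; apply/andP; split; lra.
Qed.

Lemma lmeas_Wn_core_high : lmeas (Wn_core `&` Wn_high) <= e.
Proof.
have [r0 r12 e0 er _] := Wn_scale_bounds12.
have -> : e = (2^-1 + e + r) - (2^-1 + r) by ring.
apply: lmeas_le_itv; [lra|exact: measurableI| |].
- move=> x []; rewrite /Wn_core /Wn_high /= !in_itv /= ?andbT => /andP[? ?] ?.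
  by apply/andP.
- move=> x; rewrite /= in_itv /= => /andP[? ?]; apply: Wn_core_sub.
  by rewrite /Wn_core /= in_itv /=; apply/andP; split; lra.
Qed.

Lemma Wn_cut_core_le : edges (@Wn R n) Wn_core (compl01 Wn_core) <= 2 * e.
Proof.
have [r0 r12 e0 er _] := Wn_scale_bounds12.
have mlh : measurable (Wn_low `*` Wn_high `|` Wn_high `*` Wn_low).
  by apply: measurableU; exact: measurableX.
rewrite WnE; apply: le_trans (edges_indicU_le _ _ _ _ mlh (measurableX mcore mcore)) _ => //;
  try exact: Wn_core_sub.
apply: le_trans (lerD (edges_indicU_le _ _ _ _ (measurableX mlow mhigh) (measurableX mhigh mlow))
  (lexx _)) _ => //; try exact: Wn_core_sub.
rewrite !edges_indic_setX //; try exact: Wn_core_sub.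
have -> : compl01 Wn_core `&` Wn_core = set0.
  by apply/seteqP; split => // x [[_ ?] ?].
have B_le1 I : measurable I -> lmeas (compl01 Wn_core `&` I) <= 1.
  by move=> mI; apply: lmeas_le1; [exact: measurableI|exact: subIset (or_introl BU)].
rewrite lmeas0 mulr0 addr0.
have := ler_pM (lmeas_ge0 _) (lmeas_ge0 _) lmeas_Wn_core_low (B_le1 _ mhigh).
have := ler_pM (lmeas_ge0 _) (lmeas_ge0 _) lmeas_Wn_core_high (B_le1 _ mlow).
lra.
Qed.

Lemma Wn_vol_core_ge : 4 * r ^+ 2 <= vol (@Wn R n) Wn_core.
Proof.
have [r0 _ e0 _ _] := Wn_scale_bounds12.
rewrite /vol WnE; apply: le_trans (lmeas_setX_le_edges mcore mU Wn_core_sub (@subset_refl _ _)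
  measurable_Wn_support mcore mcore (fun p hp => or_intror hp)).
by rewrite setIid (setIidr Wn_core_sub) lmeas_Wn_core; nra.
Qed.

Lemma Wn_vol_compl_core_ge : 4 * r ^+ 2 <= vol (@Wn R n) (compl01 Wn_core).
Proof.
have [r0 r12 e0 er _] := Wn_scale_bounds12.
rewrite /vol WnE; apply: le_trans (lmeas_setX_le_edges mB mU BU (@subset_refl _ _)
  measurable_Wn_support mlow mhigh (fun p hp => or_introl (or_introl hp))).
have B_low : 6^-1 <= lmeas (compl01 Wn_core `&` Wn_low).
  rewrite -[6^-1]subr0.
  apply: itv_le_lmeas; [lra|exact: measurableI| |exact: subIset (or_introl BU)].
  move=> x; rewrite /= in_itv /= => /andP[? ?]; split; [split|].
  - by rewrite /unit_itv /= in_itv /=; apply/andP; split; lra.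
  - by rewrite /Wn_core /= in_itv /= => /andP[? ?]; lra.
  - by rewrite /Wn_low /= in_itv /=; lra.
have U_high : 1 - (2^-1 + 12^-1) <= lmeas (U `&` Wn_high).
  apply: itv_le_lmeas; [lra|exact: measurableI| |exact: subIset (or_introl (@subset_refl _ _))].
  move=> x; rewrite /= in_itv /= => /andP[? ?]; split.
  - by rewrite /unit_itv /= in_itv /=; apply/andP; split; lra.
  - by rewrite /Wn_high /= in_itv /= andbT; lra.
apply: le_trans (ler_pM _ _ B_low U_high); [|lra|lra].
by rewrite expr2; nra.
Qed.

Lemma cheeger_Wn_le : cheeger (@Wn R n) <= 3 * r.
Proof.
have [r0 _ e0 _ e6] := Wn_scale_bounds12.
apply: le_trans (cheeger_le_ratio Wn_ge0 admissible_Wn_core) _.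
have vol_min :
    4 * r ^+ 2 <= Num.min (vol (@Wn R n) Wn_core) (vol (@Wn R n) (compl01 Wn_core)).
  by rewrite le_min Wn_vol_core_ge Wn_vol_compl_core_ge.
have r2 : 0 < 4 * r ^+ 2 by rewrite mulr_gt0 // exprn_gt0.
rewrite /cheeger_ratio ler_pdivrMr; last exact: lt_le_trans vol_min.
apply: le_trans Wn_cut_core_le (le_trans _ (ler_wpM2l _ vol_min)); last lra.
by rewrite !exprS expr0 in e6 *; nra.
Qed.

End cheeger_bound.
End Wn_graphon.

Lemma half_cut_ratio_ge (R : realFieldType) (a b : R) :
  0 <= a <= 2^-1 -> 0 <= b <= 2^-1 -> 0 < a + b < 1 ->
  2^-1 <= (a * (2^-1 - b) + b * (2^-1 - a)) /
          Num.min (a * 2^-1 + b * 2^-1) ((2^-1 - a) * 2^-1 + (2^-1 - b) * 2^-1).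
Proof.
move=> /andP[a0 a1] /andP[b0 b1] /andP[s0 s1].
rewrite ler_pdivlMr; last by rewrite lt_min; apply/andP; split; lra.
have ab2 : 0 <= (a - b) ^+ 2 := sqr_ge0 _; rewrite expr2 in ab2.
set m := Num.min _ _.
have [s_le|s_gt] := leP (a + b) 2^-1.
- have : m <= a * 2^-1 + b * 2^-1 by rewrite /m ge_min lexx.
  have : 0 <= (a + b) * (2^-1 - (a + b)) by apply: mulr_ge0; lra.
  nra.
- have : m <= (2^-1 - a) * 2^-1 + (2^-1 - b) * 2^-1 by rewrite /m ge_min lexx orbT.
  have : 0 <= (1 - (a + b)) * ((a + b) - 2^-1) by apply: mulr_ge0; lra.
  nra.
Qed.

Section Wlim_graphon.
Variable R : realType.
Local Notation U := (@unit_itv R).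

Definition Wlim_half : set R := `[0, 2^-1].
Definition Wlim_support : set (R * R) :=
  Wlim_half `*` ~` Wlim_half `|` ~` Wlim_half `*` Wlim_half.

Let mH : measurable Wlim_half := measurable_itv _.
Let mHC : measurable (~` Wlim_half) := measurableC mH.
Let mU : measurable U := @measurable_unit_itv R.

Lemma WlimE : @Wlim R = indic_graphon Wlim_support.
Proof.
apply/funext => x; apply/funext => y.
rewrite /Wlim /indic_graphon indicE in_setU !in_setX /= !in_setC !mem_setE /=.
by case: (x \in _); case: (y \in _).
Qed.

Lemma measurable_Wlim_support : measurable Wlim_support.
Proof. by apply: measurableU; exact: measurableX. Qed.

Lemma graphon_Wlim : is_graphon (@Wlim R).
Proof.
rewrite WlimE; apply: is_graphon_indic; first exact: measurable_Wlim_support.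
by move=> x y [[? ?]|[? ?]]; [right|left].
Qed.

Lemma Wlim_ge0 (x y : R) : 0 <= Wlim x y.
Proof. by rewrite WlimE indic_graphon_ge0. Qed.

Lemma edges_Wlim X Y : measurable X -> measurable Y -> X `<=` U -> Y `<=` U ->
  edges (@Wlim R) X Y =
  lmeas (X `&` Wlim_half) * lmeas (Y `&` ~` Wlim_half) +
  lmeas (X `&` ~` Wlim_half) * lmeas (Y `&` Wlim_half).
Proof.
move=> mX mY XU YU; rewrite WlimE edges_indicU ?edges_indic_setX //; try exact: measurableX.
by apply/disj_setPS => -[x y] [[/= ? _] [/= ? _]].
Qed.

Lemma lmeas_half : lmeas (U `&` Wlim_half) = 2^-1 /\ lmeas (U `&` ~` Wlim_half) = 2^-1.
Proof.
have HU : Wlim_half `<=` U.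
  by move=> x; rewrite /Wlim_half /unit_itv /= !in_itv /= => /andP[? ?]; apply/andP; split; lra.
have H2 : lmeas (U `&` Wlim_half) = 2^-1 by rewrite (setIidr HU) lmeas_itv ?subr0 //; lra.
split => //; have := lmeas_setIC mU mH (@subset_refl _ U).
by rewrite lmeas_unit_itv H2; lra.
Qed.

Lemma Wlim_ratio_ge A : admissible A -> 2^-1 <= cheeger_ratio (@Wlim R) A.
Proof.
move=> [mA AU A0 A1]; have [h hC] := lmeas_half.
rewrite /leb (lmeasE mA AU) !lte_fin in A0 A1.
have mB := measurable_compl01 mA; have BU := @compl01_sub _ A.
rewrite /cheeger_ratio /vol !edges_Wlim // h hC.
have := lmeas_compl01I mA mH AU; have := lmeas_compl01I mA mHC AU.
rewrite h hC (lmeas_setIC mA mH AU) in A0 A1 * => BHC BH.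
rewrite (_ : lmeas (compl01 A `&` Wlim_half) = 2^-1 - lmeas (A `&` Wlim_half)); last lra.
rewrite (_ : lmeas (compl01 A `&` ~` Wlim_half) = 2^-1 - lmeas (A `&` ~` Wlim_half)); last lra.
have := lmeas_ge0 (A `&` Wlim_half); have := lmeas_ge0 (A `&` ~` Wlim_half).
have := lmeas_ge0 (compl01 A `&` Wlim_half); have := lmeas_ge0 (compl01 A `&` ~` Wlim_half).
move=> *; apply: half_cut_ratio_ge; apply/andP; split; lra.
Qed.

Definition Wlim_mid : set R := `[4^-1, 4^-1 + 2^-1].

Lemma admissible_Wlim_mid : admissible Wlim_mid.
Proof. by apply: admissible_itv; lra. Qed.

Lemma Wlim_ratio_mid : cheeger_ratio (@Wlim R) Wlim_mid = 2^-1.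
Proof.
have [mM MU _ _] := admissible_Wlim_mid; have [h hC] := lmeas_half.
have mB := measurable_compl01 mM; have BU := @compl01_sub _ Wlim_mid.
have MH : lmeas (Wlim_mid `&` Wlim_half) = 4^-1.
  rewrite (_ : _ `&` _ = `[4^-1, 2^-1]%classic) ?lmeas_itv; [lra|lra|].
  apply/seteqP; split => x; rewrite /Wlim_mid /Wlim_half /= !in_itv /=.
    by move=> [/andP[? ?] /andP[? ?]]; apply/andP.
  by move=> /andP[? ?]; split; apply/andP; split; lra.
have MHC : lmeas (Wlim_mid `&` ~` Wlim_half) = 4^-1.
  by have := lmeas_setIC mM mH MU; rewrite MH /Wlim_mid lmeas_itv; lra.
have := lmeas_compl01I mM mH MU; have := lmeas_compl01I mM mHC MU.
rewrite h hC MH MHC => BHC BH.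
rewrite /cheeger_ratio /vol !edges_Wlim // h hC MH MHC.
rewrite (_ : lmeas (compl01 Wlim_mid `&` Wlim_half) = 4^-1); last lra.
rewrite (_ : lmeas (compl01 Wlim_mid `&` ~` Wlim_half) = 4^-1); last lra.
by rewrite minxx; field.
Qed.

Lemma cheeger_Wlim : cheeger (@Wlim R) = 2^-1.
Proof.
apply/le_anti/andP; split.
  by rewrite -Wlim_ratio_mid; exact: cheeger_le_ratio Wlim_ge0 admissible_Wlim_mid.
apply: le_cheeger Wlim_ratio_ge.
by exists Wlim_mid; exact: admissible_Wlim_mid.
Qed.

End Wlim_graphon.

Section L1_distance.
Variables (R : realType) (n : nat).
Local Notation U := (@unit_itv R).
Local Notation r := (n%:R^-1 : R).
Local Notation e := (expR (- n%:R) : R).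
Local Notation core := (@Wn_core R n).

Section off_core.
Hypothesis n3 : (3 <= n)%N.

Let off_core_sides (t : R) : U t -> ~ core t -> [/\ (t <= 2^-1 - r) = (t <= 2^-1),
  (2^-1 + r <= t) = ~~ (t <= 2^-1) & (2^-1 - e - r <= t <= 2^-1 + e + r) = false].
Proof.
rewrite /unit_itv /Wn_core /= !in_itv /= => /andP[t0 _] tcore.
have [r0 _ e0 _] := @Wn_scale_bounds R n n3.
have [tc|tc] := ltP t (2^-1 - e - r).
  split; last by apply/negbTE/andP => -[? ?]; lra.
  - by apply/idP/idP => _; lra.
  - by apply/idP/idP => H; [rewrite -ltNge; lra | move: H; rewrite -ltNge => H; lra].
have [td|td] := leP t (2^-1 + e + r); first by exfalso; apply: tcore; rewrite tc td.
split; last by apply/negbTE/andP => -[? ?]; lra.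
- by apply/idP/idP => H; lra.
- by apply/idP/idP => H; [rewrite -ltNge; lra | lra].
Qed.

Lemma Wn_eq_Wlim_off_core (x y : R) : U x -> U y -> ~ core x -> ~ core y ->
  Wn n x y = Wlim x y.
Proof.
move=> Ux Uy cx cy.
have [ex1 ex2 ex3] := off_core_sides Ux cx; have [ey1 ey2 ey3] := off_core_sides Uy cy.
move: Ux Uy; rewrite /unit_itv /= !in_itv /= => /andP[x0 _] /andP[y0 _].
rewrite /Wn /Wlim !in_itv /= x0 y0 /= !andbA ex1 ex2 ey1 ey2 ex3 /=.
by case: (x <= 2^-1); case: (y <= 2^-1).
Qed.

End off_core.

Definition Wn_strip : set (R * R) := core `*` U `|` U `*` core.

Lemma measurable_Wn_Wlim_dist :
  measurable_fun setT (fun p : R * R => `|Wn n p.1 p.2 - Wlim p.1 p.2|).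
Proof.
rewrite WnE WlimE; apply: measurableT_comp; first exact: normr_measurable.
by apply: measurable_funB; apply: measurable_indic_graphon;
  [exact: measurable_Wn_support|exact: measurable_Wlim_support].
Qed.

Lemma Wn_Wlim_dist_le1 (p : R * R) : `|Wn n p.1 p.2 - Wlim p.1 p.2| <= 1.
Proof.
rewrite WnE WlimE /indic_graphon !indicE.
by case: (_ \in _); case: (_ \in _); rewrite ?subrr ?subr0 ?sub0r ?normrN ?normr0 ?normr1.
Qed.

Lemma Wn_Wlim_dist_le_strip : (3 <= n)%N -> forall p : R * R, (U `*` U) p ->
  `|Wn n p.1 p.2 - Wlim p.1 p.2| <= \1_Wn_strip p.
Proof.
move=> n3 [x y] [/= Ux Uy]; have [/set_mem strip_xy|strip_xy] := boolP ((x, y) \in Wn_strip).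
  by rewrite indicE mem_set //; exact: (Wn_Wlim_dist_le1 (x, y)).
rewrite Wn_eq_Wlim_off_core // ?subrr ?normr0 ?indicE ?ler0n //.
- by move=> cx; apply: (negP strip_xy); apply: mem_set; left.
- by move=> cy; apply: (negP strip_xy); apply: mem_set; right.
Qed.

Lemma L1_Wn_Wlim_le : (12 <= n)%N ->
  (\int[@leb2 R]_(p in U `*` U) (`|Wn n p.1 p.2 - Wlim p.1 p.2|)%:E <= (8 * r)%:E)%E.
Proof.
move=> n12; have n3 : (3 <= n)%N := leq_trans (isT : (3 <= 12)%N) n12.
have [r0 _ e0 er _] := @Wn_scale_bounds12 R n n12.
have mU := @measurable_unit_itv R; have mUU := measurableX mU mU.
have coreU := @Wn_core_sub R n n12; have mcore : measurable core := measurable_itv _.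
have mstrip : measurable Wn_strip by apply: measurableU; exact: measurableX.
have int_dist : (@leb2 R).-integrable (U `*` U)
    (EFin \o (fun p => `|Wn n p.1 p.2 - Wlim p.1 p.2|)).
  apply: (integrable_box (M := 1) mU mU (@subset_refl _ _) (@subset_refl _ _)
    measurable_Wn_Wlim_dist) => p.
  by rewrite normr_id Wn_Wlim_dist_le1.
have fin_dist : (\int[@leb2 R]_(p in U `*` U) (`|Wn n p.1 p.2 - Wlim p.1 p.2|)%:E)%E
    \is a fin_num.
  by apply: (integrable_fin_num _ int_dist); exact: mUU.
rewrite -(fineK fin_dist) lee_fin.
apply: le_trans (le_Rintegral _ int_dist (integrable_indic_box mU mU _ _ mstrip)
  (Wn_Wlim_dist_le_strip n3)) _; try exact: subset_refl; try exact: mUU.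
rewrite -edges_indic //; apply: le_trans (edges_indicU_le _ _ _ _ _ _) _ => //;
  try exact: measurableX.
rewrite !edges_indic_setX // setIid (setIidr coreU) lmeas_unit_itv (@lmeas_Wn_core R n n12).
lra.
Qed.

End L1_distance.

Lemma cvg_invn (R : realType) : (fun n : nat => n%:R^-1 : R) @ \oo --> 0.
Proof. by rewrite -cvg_shiftS; exact: cvg_harmonic. Qed.

Lemma cvg_cheeger_Wn (R : realType) : (fun n : nat => cheeger (@Wn R n)) @ \oo --> 0.
Proof.
apply: (@squeeze_cvgr _ _ _ _ (fun _ => 0) (fun n => 3 * n%:R^-1)); last 2 first.
- exact: cvg_cst.
- by rewrite -(mulr0 3); apply: cvgM; [exact: cvg_cst|exact: cvg_invn].
exists 12%N => // n n12.
by rewrite cheeger_ge0 ?cheeger_Wn_le //; exact: Wn_ge0.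
Qed.

Lemma cvg_L1_Wn_Wlim (R : realType) :
  (fun n : nat => \int[@leb2 R]_(p in @unit_itv R `*` @unit_itv R)
                    (`|Wn n p.1 p.2 - Wlim p.1 p.2|)%:E)%E @ \oo --> 0%E.
Proof.
apply: (@squeeze_cvge _ _ _ _ (fun _ => 0%E) _ (fun n => (8 * n%:R^-1)%:E)); last 2 first.
- exact: cvg_cst.
- apply: cvg_EFin; first by exists 0%N.
  by rewrite -(mulr0 8); apply: cvgM; [exact: cvg_cst|exact: cvg_invn].
exists 12%N => // n n12.
by rewrite integral_ge0 ?L1_Wn_Wlim_le // => p _; rewrite lee_fin.
Qed.

Theorem mainTheorem20 (R : realType) :
  (forall n : nat, (3 <= n)%N -> is_graphon (@Wn R n) /\ graphon_connected (@Wn R n)) /\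
  is_graphon (@Wlim R) /\
  (fun n : nat => (\int[@leb2 R]_(p in @unit_itv R `*` @unit_itv R)
                     (`|@Wn R n p.1 p.2 - Wlim p.1 p.2|)%:E)%E) @ \oo --> 0%E /\
  (fun n : nat => cheeger (@Wn R n)) @ \oo --> (0 : R) /\
  cheeger (@Wlim R) = 2^-1 /\
  ~ ((fun n : nat => cheeger (@Wn R n)) @ \oo --> cheeger (@Wlim R)).
Proof.
split; first by move=> n n3; split; [exact: graphon_Wn|exact: Wn_connected].
split; first exact: graphon_Wlim.
split; first exact: cvg_L1_Wn_Wlim.
split; first exact: cvg_cheeger_Wn.
split; first exact: cheeger_Wlim.
rewrite cheeger_Wlim => /(cvg_lim (@Rhausdorff R)).
by rewrite (cvg_lim (@Rhausdorff R) (@cvg_cheeger_Wn R)); lra.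
Qed.
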